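(* Let $n\ge 1$, $\nu\ge 1$ be integers and $\delta\in\{0,1,2\}$. If $[a_1,a_2,\ldots,a_{2\nu+\delta}]$ is a vertex of the orthogonal graph $\mathcal{O}^{(2\nu+\delta)}_{2^n}$, then $a_i\in\mathbb{Z}_{2^n}^\times$ for some $i\in\{1,2,\ldots,2\nu\}$.
   Context: Let $V^{2\nu+\delta}$ be the set of tuples $\vec a=(a_1,\ldots,a_{2\nu+\delta})\in(\mathbb{Z}_{2^n})^{2\nu+\delta}$ such that some $a_i$ is a unit of $\mathbb{Z}_{2^n}$. Write $\vec a\sim\vec b$ if $\vec a=\lambda\vec b$ for some $\lambda\in\mathbb{Z}_{2^n}^\times$, let $[\vec a]=[a_1,\ldots,a_{2\nu+\delta}]$ denote the equivalence class and $V^{2\nu+\delta}_\sim$ the set of classes. Let $G_{2\nu+\delta,\Delta}$ be the $(2\nu+\delta)\times(2\nu+\delta)$ block-diagonal-type matrix over $\mathbb{Z}_{2^n}$ given by $\begin{pmatrix}0&I_\nu&\\ &0&\\ &&\Delta\end{pmatrix}$ (the first two block rows/columns of size $\nu$, all unspecified blocks zero), where $\Delta$ is empty if $\delta=0$, $\Delta=(1)$ if $\delta=1$, and $\Delta=\begin{pmatrix}z&1\\0&z\end{pmatrix}$ if $\delta=2$, with $z$ a fixed unit of $\mathbb{Z}_{2^n}$ (equivalently, $z\notin\{x^2+x:x\in\mathbb{Z}_{2^n}\}$). The orthogonal graph $\mathcal{O}^{(2\nu+\delta)}_{2^n}$ has vertex set $\{[\vec a]\in V^{2\nu+\delta}_\sim:\vec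 a\,G_{2\nu+\delta,\Delta}\,\vec a^t=0\}$, and $[\vec a]$ is adjacent to $[\vec b]$ iff $\vec a\,(G_{2\nu+\delta,\Delta}+G_{2\nu+\delta,\Delta}^t)\,\vec b^t\in\mathbb{Z}_{2^n}^\times$. *)

From HB Require Import structures.
From mathcomp Require Import all_boot all_order all_algebra.
Set Implicit Arguments. Unset Strict Implicit. Unset Printing Implicit Defensive.
Import GRing.Theory.
Local Open Scope ring_scope.

Definition Delta_entry (R : nzRingType) (delta : nat) (z : R) (k l : nat) : R :=
  match delta with
  | 1%N => if (k == 0%N) && (l == 0%N) then 1 else 0
  | 2%N => if k == l then z else if (k == 0%N) && (l == 1%N) then 1 else 0
  | _ => 0
  end.

(* G_{2nu+delta,Delta} = [[0, I_nu, 0], [0, 0, 0], [0, 0, Delta]]. *)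
Definition Gmat (R : nzRingType) (nu delta : nat) (z : R) : 'M[R]_(2 * nu + delta) :=
  \matrix_(i < 2 * nu + delta, j < 2 * nu + delta)
    if (nat_of_ord i < nu)%N && (nat_of_ord j == (nat_of_ord i + nu)%N) then 1
    else if (2 * nu <= nat_of_ord i)%N && (2 * nu <= nat_of_ord j)%N
         then Delta_entry delta z (nat_of_ord i - 2 * nu)%N (nat_of_ord j - 2 * nu)%N
         else 0.

(* A representative a of a vertex [a] of the orthogonal graph:
   some coordinate of a is a unit (a in V) and a G a^t = 0.
   Being a vertex is invariant under scaling by units, so this
   predicate on representatives describes the vertex set. *)
Definition is_orth_vertex (R : comUnitRingType) (nu delta : nat) (z : R)
  (a : 'rV[R]_(2 * nu + delta)) : Prop :=
  (exists i, a 0 i \is a GRing.unit) /\ a *m Gmat nu delta z *m a^T = 0.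
Arguments is_orth_vertex [R] nu delta z a.

(* Reduce modulo 2.  Reduction Z/2^n -> Z/2 is a ring morphism, and an element
   of Z/2^n is a unit exactly when its reduction is nonzero.  If a_1, ..., a_2nu
   were all non-units, the reduction of a would be an isotropic vector of G over
   Z/2 (with z reduced to 1) supported on the Delta-coordinates.  There the form
   is x^2 (delta = 1) or x^2 + xy + y^2 (delta = 2), both anisotropic over Z/2,
   so the reduction of a would vanish, contradicting that some a_i is a unit. *)

From HB Require Import structures.
From mathcomp Require Import all_boot all_order all_algebra zify.
Set Implicit Arguments.
Unset Strict Implicit.
Unset Printing Implicit Defensive.
Import GRing.Theory.
Local Open Scope ring_scope.

Section ZpReduce.

Variables m d : nat.

Definition Zp_reduce (x : 'Z_m) : 'Z_d := (val x)%:R.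

Hypotheses (d_gt1 : (1 < d)%N) (m_gt0 : (0 < m)%N) (d_dvd_m : (d %| m)%N).

Let m_gt1 : (1 < m)%N.
Proof. exact: leq_trans d_gt1 (dvdn_leq m_gt0 d_dvd_m). Qed.

Let natr_modm k : ((k %% (Zp_trunc m).+2)%N%:R : 'Z_d) = k%:R.
Proof. by apply: ord_inj; rewrite !val_Zp_nat // Zp_cast // (modn_dvdm _ d_dvd_m). Qed.

Lemma Zp_reduce_is_nmod_morphism : nmod_morphism Zp_reduce.
Proof. by split=> // x y; rewrite /Zp_reduce natr_modm natrD. Qed.

Lemma Zp_reduce_is_monoid_morphism : monoid_morphism Zp_reduce.
Proof. by split=> [|x y]; rewrite /Zp_reduce natr_modm ?natrM. Qed.

Definition Zp_reduce_rmorphism : {rmorphism 'Z_m -> 'Z_d} :=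
  HB.pack Zp_reduce
    (GRing.isNmodMorphism.Build _ _ Zp_reduce Zp_reduce_is_nmod_morphism)
    (GRing.isMonoidMorphism.Build _ _ Zp_reduce Zp_reduce_is_monoid_morphism).

End ZpReduce.

Lemma Zp_reduce_unitE p n (x : 'Z_(p ^ n)) : prime p -> (0 < n)%N ->
  (x \is a GRing.unit) = (Zp_reduce p x != 0).
Proof.
move=> p_pr n_gt0; have p_gt1 := prime_gt1 p_pr.
have pn_gt1 : (1 < p ^ n)%N by rewrite -(expn0 p) ltn_exp2l.
rewrite -[x in LHS]natr_Zp unitZpE // coprime_pexpl // prime_coprime //.
by rewrite /Zp_reduce -val_eqE /= val_Zp_nat.
Qed.

Definition Hmat {R : nzRingType} (nu : nat) : 'M[R]_(2 * nu) :=
  \matrix_(i, j) if (i < nu)%N && (j == i + nu :> nat)%N then 1 else 0.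

Definition Delta_mx {R : nzRingType} (delta : nat) (z : R) : 'M[R]_delta :=
  \matrix_(k, l) Delta_entry delta z k l.

Lemma Gmat_block (R : nzRingType) nu delta (z : R) :
  Gmat nu delta z = block_mx (Hmat nu) 0 0 (Delta_mx delta z).
Proof.
rewrite -[Gmat _ _ _]submxK; congr block_mx; apply/matrixP => i j; rewrite !mxE /=.
- by rewrite [(2 * nu <= i)%N]leqNgt ltn_ord.
- have -> : (i < nu)%N && (2 * nu + j == i + nu)%N = false by lia.
  by rewrite [(2 * nu <= i)%N]leqNgt ltn_ord.
- by rewrite [(2 * nu <= j)%N]leqNgt ltn_ord andbF; case: ifP => // /andP[]; lia.
- have -> : (2 * nu + i < nu)%N = false by lia.
  by rewrite !leq_addr !addKn.
Qed.

Lemma Gmat_form (R : nzRingType) nu delta (z : R) (u : 'rV_(2 * nu)) (b : 'rV_delta) :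
  row_mx u b *m Gmat nu delta z *m (row_mx u b)^T =
  u *m Hmat nu *m u^T + b *m Delta_mx delta z *m b^T.
Proof.
by rewrite Gmat_block mul_row_block tr_row_mx mul_row_col !mulmx0 addr0 add0r.
Qed.

Lemma map_Gmat (R S : nzRingType) (f : {rmorphism R -> S}) nu delta (z : R) :
  map_mx f (Gmat nu delta z) = Gmat nu delta (f z).
Proof.
apply/matrixP => i j; rewrite !mxE.
case: ifP => _; first exact: rmorph1.
case: ifP => _; last exact: rmorph0.
case: delta i j => [|[|[|?]]] i j /=; rewrite ?rmorph0 //;
  by do ![case: ifP => _]; rewrite ?rmorph0 ?rmorph1.
Qed.

Lemma Z2_cases (x : 'Z_2) : x = 0 \/ x = 1.
Proof. by case: x => [[|[|//]]] x_lt2; [left|right]; apply: val_inj. Qed.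

Lemma Delta_mx_anisotropic_Z2 delta (z : 'Z_2) (b : 'rV_delta) :
  (delta <= 2)%N -> z != 0 -> b *m Delta_mx delta z *m b^T = 0 -> b = 0.
Proof.
move=> delta_le2; have [->|->] := Z2_cases z => // _.
case: delta delta_le2 b => [|[|[|//]]] _ b; first by move=> _; apply/rowP => -[].
all: move/(congr1 (fun M : 'M_1 => M 0 0)); rewrite !(mxE, big_ord_recl, big_ord0) /=.
- have [b0|b0] := Z2_cases (b 0 ord0); rewrite b0 => Q; last by move/eqP: Q.
  by apply/rowP => k; rewrite ord1 b0 mxE.
- have [b0|b0] := Z2_cases (b 0 ord0); have [b1|b1] := Z2_cases (b 0 (lift ord0 ord0));
    rewrite b0 b1 => Q; try by move/eqP: Q.
  apply/rowP => -[[|[|//]] k_lt2]; rewrite mxE; [rewrite -b0|rewrite -b1];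
    by congr (b 0 _); apply: val_inj.
Qed.

Lemma Gmat_isotropic_Z2 nu delta (z : 'Z_2) (a : 'rV_(2 * nu + delta)) :
  (delta <= 2)%N -> z != 0 -> lsubmx a = 0 ->
  a *m Gmat nu delta z *m a^T = 0 -> a = 0.
Proof.
move=> delta_le2 z_neq0 a_l0; rewrite -[a]hsubmxK a_l0 Gmat_form !mul0mx add0r => Q.
by rewrite (Delta_mx_anisotropic_Z2 delta_le2 z_neq0 Q) row_mx0.
Qed.

Theorem lemma2p1 (n nu delta : nat) (z : 'Z_(2 ^ n))
  (a : 'rV['Z_(2 ^ n)]_(2 * nu + delta)) :
  (1 <= n)%N -> (1 <= nu)%N -> (delta <= 2)%N ->
  z \is a GRing.unit ->
  is_orth_vertex nu delta z a ->
  exists i : 'I_(2 * nu + delta), (i < 2 * nu)%N /\ a 0 i \is a GRing.unit.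
Proof.
move=> n_gt0 _ delta_le2 z_unit [[i0 a_i0_unit] a_isotropic].
pose f := Zp_reduce_rmorphism (ltnSn 1) (expn_gt0 2 n) (dvdn_exp n_gt0 (dvdnn 2)).
have unitE x : (x \is a GRing.unit) = (f x != 0) by exact: Zp_reduce_unitE.
have [i /andP[i_lt a_i_unit]|no_unit] :=
  pickP [pred i : 'I_(2 * nu + delta) | (i < 2 * nu)%N && (a 0 i \is a GRing.unit)].
  by exists i.
have fa0 : map_mx f a = 0.
  apply: (Gmat_isotropic_Z2 (z := f z) delta_le2).
  - by rewrite -unitE.
  - apply/rowP => i; rewrite !mxE; apply/eqP.
    by have := no_unit (lshift delta i); rewrite /= ltn_ord unitE => /negbFE.
  - by rewrite -map_Gmat map_trmx -!map_mxM a_isotropic map_mx0.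
move/matrixP/(_ 0 i0): fa0; rewrite !mxE => fa_i0.
by rewrite unitE fa_i0 eqxx in a_i0_unit.
Qed.
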